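(* For an $r$-graph $H$, $C_r(n,H)$ is bounded (for all $n$) by a constant $C(H)$ depending only on $H$ if and only if $H$ is not $2$-locally large.
   Context: An $r$-graph is an $r$-uniform hypergraph; $K_n^{(r)}$ is the complete $r$-graph on $n$ vertices. A copy of an $r$-graph $H$ in $K_n^{(r)}$ is a subhypergraph isomorphic to $H$. An $(n,r,H)$-local coloring with $k$ colors is a family of edge-colorings $f_v:E(K_n^{(r)})\to[k]$, one per vertex $v$, such that for every copy $T$ of $H$ there is $u\in V(T)$ with $f_u$ injective on $E(T)$. $C_r(n,H)$ is the minimum such $k$. Let $H$ be an $r$-graph on $m$ vertices and $\sigma:V(H)\to[m]$ a bijection. For $x\in V(H)$ and $1\le i\le r$, $T_x^i$ is the set of edges $e\ni x$ such that $\sigma(x)$ is the $i$-th smallest of the values $\sigma(v)$, $v\in e$. For $r+1\le i\le 2r+1$, $T_x^i$ is the set of edges $e\not\ni x$ such that $\sigma(x)$ is the $(i-r)$-th smallest among the values $\sigma(v)$, $v\in e\cup\{x\}$. (The sets $T_x^1,\dots,T_x^{2r+1}$ partition $E(H)$.) $H$ is $2$-locally large if there exists a bijection $\sigma:V(H)\to[m]$ such that for every vertex $x\in V(H)$ some $T_x^i$, $i\in[2r+1]$, contains at least two edges. *)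

From mathcomp Require Import all_boot all_fingroup.
Set Implicit Arguments. Unset Strict Implicit. Unset Printing Implicit Defensive.

Definition r_uniform (m r : nat) (E : {set {set 'I_m}}) : Prop :=
  forall e, e \in E -> #|e| = r.

(* Edges of K_n^(r) are the r-subsets of 'I_n.  A local coloring with k colors
   is a family f_v (v : 'I_n) of colorings of edges with colors 'I_k
   (= [k]); f_v is given on all subsets, only its values on r-sets matter.
   A copy T of H in K_n^(r) is the image of H under an injection
   phi : 'I_m -> 'I_n; V(T) = phi(V(H)), E(T) = { phi(e) : e in E(H) }. *)
Definition local_coloring (n r m : nat) (E : {set {set 'I_m}}) (k : nat)
  (f : {ffun 'I_n -> {ffun {set 'I_n} -> 'I_k}}) : bool :=
  [forall phi : {ffun 'I_m -> 'I_n}, injectiveb phi ==>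
     [exists x : 'I_m, [forall e in E, forall e' in E,
        (f (phi x) (phi @: e) == f (phi x) (phi @: e')) ==> (phi @: e == phi @: e')]]].

Definition has_local_coloring (n r m : nat) (E : {set {set 'I_m}}) (k : nat) : bool :=
  [exists f : {ffun 'I_n -> {ffun {set 'I_n} -> 'I_k}}, local_coloring r E f].

(* The disjunct (k == 2^n) only guarantees existence of the minimum; a local
   coloring with #|{set 'I_n}| colors (distinct color per set) exists whenever
   H has a vertex, so for m > 0 this is exactly the minimum of the paper. *)
Lemma Cr_ex (n r m : nat) (E : {set {set 'I_m}}) :
  exists k, has_local_coloring n r E k || (k == 2 ^ n).
Proof. by exists (2 ^ n); rewrite eqxx orbT. Qed.

Definition Cr (r n m : nat) (E : {set {set 'I_m}}) : nat :=
  ex_minn (Cr_ex n r E).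

(* T_x^i for the ordering sigma : V(H) -> [m] (a bijection, i.e. a permutation
   of 'I_m; values are compared as naturals).  "sigma x is the j-th smallest
   among the values sigma v, v in S" (S containing x) means exactly that j-1
   elements v of S have sigma v < sigma x; for S = e cup {x} with x not in e,
   these are the elements of e. *)
Definition Tset (r m : nat) (E : {set {set 'I_m}}) (sigma : {perm 'I_m})
  (x : 'I_m) (i : nat) : {set {set 'I_m}} :=
  if (1 <= i <= r) then
    [set e in E | (x \in e) && (#|[set v in e | sigma v < sigma x]| == i.-1)]
  else
    [set e in E | (x \notin e) && (#|[set v in e | sigma v < sigma x]| == i - r - 1)].

Definition two_locally_large (r m : nat) (E : {set {set 'I_m}}) : Prop :=
  exists sigma : {perm 'I_m}, forall x : 'I_m,
    exists i : nat, 1 <= i <= 2 * r + 1 /\ 2 <= #|Tset r E sigma x i|.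

From mathcomp Require Import all_boot all_fingroup.
From mathcomp Require Import zify.
From Stdlib Require Import Classical.
Set Implicit Arguments. Unset Strict Implicit. Unset Printing Implicit Defensive.

(* If H is not 2-locally large, then for every copy phi(H), ordering V(H) as phi
   orders its image yields a vertex x all of whose classes T_x^i contain at most
   one edge.  The class of an edge e at x only depends on whether x lies in e and
   on the rank of x in e, both of which can be read off phi(e) and phi(x); so the
   coloring of S at v by this data, with 2r+1 colors, is local for every n.

   Conversely, let sigma witness 2-local largeness and let f be a local coloring
   with k colors.  Color each (r+1)-set S by its pattern, the table of the colors
   f_z(S \ w) indexed by the ranks of z and w in S.  For n large, Ramsey's theorem
   gives m+1 vertices Y on which the pattern is constant; embed H into Y along
   sigma, below a top vertex of Y.  If e and e' lie in the same T_x^i, the colors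
   of phi(e) and phi(e') at phi(x) are the same entry of the patterns of
   {top} u phi(e) and {top} u phi(e') when i <= r, and of {phi(x)} u phi(e) and
   {phi(x)} u phi(e') when i > r; hence they coincide and f is not local. *)

Section Ramsey.

Variable C : finType.

Definition homogeneous (T : finType) p (g : {set T} -> C) (Y : {set T}) :=
  forall A B : {set T},
  A \subset Y -> B \subset Y -> #|A| = p -> #|B| = p -> g A = g B.

Inductive prehomogeneous (T : finType) (p : nat) (g : {set T} -> C) (col : T -> C) :
  {set T} -> Prop :=
| prehomogeneous0 : prehomogeneous p g col set0
| prehomogeneousU1 (z : T) (Z : {set T}) : z \notin Z -> prehomogeneous p g col Z ->
    (forall A : {set T}, A \subset Z -> #|A| = p -> g (z |: A) = col z) ->
    prehomogeneous p g col (z |: Z).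

Lemma eq_prehomogeneous (T : finType) p g (col col' : T -> C) (Z : {set T}) :
  {in Z, col =1 col'} -> prehomogeneous p g col Z -> prehomogeneous p g col' Z.
Proof.
move=> eq_col hZ; elim: Z / hZ eq_col => [|z Z zZ _ IH hz] eq_col.
  exact: prehomogeneous0.
apply: prehomogeneousU1 => //.
  by apply: IH => y yZ; apply: eq_col; rewrite setU1r.
by move=> A sAZ cardA; rewrite hz // eq_col // setU11.
Qed.

Lemma prehomogeneous_col (T : finType) p g (col : T -> C) (Z B : {set T}) :
  prehomogeneous p g col Z -> B \subset Z -> #|B| = p.+1 ->
  exists2 z, z \in B & g B = col z.
Proof.
move=> hZ; elim: Z / hZ B => [|z Z zZ _ IH hz] B sBZ cardB.
  by move: sBZ cardB; rewrite subset0 => /eqP ->; rewrite cards0.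
have [zB | zNB] := boolP (z \in B).
  exists z => //; rewrite -(setD1K zB) hz //.
    apply/subsetP => w /setD1P [wz wB].
    by have /setU1P [/eqP | //] := subsetP sBZ w wB; rewrite (negbTE wz).
  by move: cardB; rewrite (cardsD1 z B) zB => -[].
apply: IH => //; apply/subsetP => w wB.
have /setU1P [wz | //] := subsetP sBZ w wB.
by rewrite -wz wB in zNB.
Qed.

Lemma pigeonhole_class (T : finType) (col : T -> C) (Z : {set T}) t :
  #|C| * t < #|Z| -> exists c, t < #|[set z in Z | col z == c]|.
Proof.
move=> hZ; apply/existsP; apply: contraTT hZ => /existsPn small.
rewrite -leqNgt -sum1_card (partition_big col predT) //= -sum_nat_const.
by apply: leq_sum => c _; rewrite sum1_card -cardsE leqNgt small.
Qed.

Definition ramsey_bound p t N := forall (T : finType) (X : {set T}) (g : {set T} -> C),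
  N <= #|X| -> exists2 Y : {set T}, Y \subset X & t <= #|Y| /\ homogeneous p g Y.

Lemma ramsey_bound0 t : ramsey_bound 0 t t.
Proof.
move=> T X g hX; exists X => //; split=> // A B _ _.
by move=> /cards0_eq -> /cards0_eq ->.
Qed.

(* Erdos-Rado: pick z0, pass to a large set homogeneous for A |-> g (z0 |: A)
   and recurse inside it. *)
Lemma exists_prehomogeneous p : (forall t, exists N, ramsey_bound p t N) ->
  forall L, exists N, forall (T : finType) (X : {set T}) (g : {set T} -> C),
  N <= #|X| -> exists (Z : {set T}) (col : T -> C),
    [/\ Z \subset X, L <= #|Z| & prehomogeneous p g col Z].
Proof.
move=> ramsey_p; elim=> [|L [NL IH]].
  exists 0 => T X g _; exists set0, (fun=> g set0).
  by split; rewrite ?sub0set //; exact: prehomogeneous0.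
have [N hN] := ramsey_p NL; exists N.+1 => T X g hX.
have [z0 z0X] : exists z0, z0 \in X by apply/set0Pn; rewrite -card_gt0; lia.
have hXz0 : N <= #|X :\ z0| by move: hX; rewrite (cardsD1 z0 X) z0X.
have [Y sYX [hY homY]] := hN T _ (fun A => g (z0 |: A)) hXz0.
have [Z [col [sZY hZ preZ]]] := IH T Y g hY.
have z0NZ : z0 \notin Z.
  by apply/negP => /(subsetP sZY) /(subsetP sYX); rewrite setD11.
pose c0 := g (z0 |: odflt set0 [pick A : {set T} | (A \subset Y) && (#|A| == p)]).
exists (z0 |: Z), (fun y => if y == z0 then c0 else col y); split.
- rewrite subUset sub1set z0X (subset_trans sZY) //.
  exact: subset_trans sYX (subsetDl _ _).
- by rewrite cardsU1 z0NZ.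
apply: prehomogeneousU1 => //.
  apply: eq_prehomogeneous preZ => y yZ /=.
  by case: eqP => // yz0; rewrite -yz0 yZ in z0NZ.
move=> A sAZ cardA; rewrite eqxx /c0.
case: pickP => [A0 /andP [sA0Y /eqP cardA0] | /(_ A)] /=.
  by apply: homY => //; exact: subset_trans sAZ sZY.
by rewrite (subset_trans sAZ sZY) cardA eqxx.
Qed.

Lemma ramsey_succ p : (forall t, exists N, ramsey_bound p t N) ->
  forall t, exists N, ramsey_bound p.+1 t N.
Proof.
move=> ramsey_p t; have [N hN] := exists_prehomogeneous ramsey_p (#|C| * t).+1.
exists N => T X g hX; have [Z [col [sZX hZ preZ]]] := hN T X g hX.
have [c hc] := pigeonhole_class col hZ.
have sZcZ : [set z in Z | col z == c] \subset Z by apply/subsetP => z /setIdP [].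
exists [set z in Z | col z == c]; first exact: subset_trans sZX.
split; first exact: ltnW.
suff colA (A : {set T}) : A \subset [set z in Z | col z == c] -> #|A| = p.+1 -> g A = c.
  by move=> A B sA sB cardA cardB; rewrite colA // colA.
move=> sA cardA; have [z zA ->] := prehomogeneous_col preZ (subset_trans sA sZcZ) cardA.
by have /setIdP [_ /eqP] := subsetP sA z zA.
Qed.

Theorem hypergraph_ramsey p t : exists N, ramsey_bound p t N.
Proof.
elim: p t => [t | p IH]; first by exists t; exact: ramsey_bound0.
exact: ramsey_succ.
Qed.

End Ramsey.

Definition rank (T : finType) (f : T -> nat) (S : {set T}) (x : T) :=
  #|[set y in S | f y < f x]|.

Section Rank.

Variables (T : finType) (f : T -> nat) (S : {set T}).

Lemma rank_le_card x : rank f S x <= #|S|.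
Proof. by apply: subset_leq_card; apply/subsetP => y /setIdP []. Qed.

Lemma rank_lt_card x : x \in S -> rank f S x < #|S|.
Proof.
move=> xS; apply: proper_card; apply/properP; split; first by apply/subsetP => y /setIdP [].
by exists x; rewrite // inE ltnn andbF.
Qed.

Lemma rank_lt u v : u \in S -> (rank f S u < rank f S v) = (f u < f v).
Proof.
move=> uS; have [fuv | fvu] := ltnP (f u) (f v).
  apply: proper_card; apply/properP; split.
    by apply/subsetP => y /setIdP [yS fyu]; rewrite inE yS (ltn_trans fyu).
  by exists u; rewrite !inE ?uS ?fuv ?ltnn.
apply/negbTE; rewrite -leqNgt; apply: subset_leq_card; apply/subsetP => y.
by move=> /setIdP [yS fyv]; rewrite inE yS (leq_trans fyv).
Qed.

Lemma rank_eq u v : u \in S -> v \in S -> rank f S u = rank f S v -> f u = f v.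
Proof.
move=> uS vS ruv; case: (ltngtP (f u) (f v)) => // [lt_uv | lt_vu].
  by move: lt_uv; rewrite -(rank_lt _ uS) ruv ltnn.
by move: lt_vu; rewrite -(rank_lt _ vS) ruv ltnn.
Qed.

Lemma rank_setU1 y x : f x <= f y -> rank f (y |: S) x = rank f S x.
Proof.
move=> fxy; apply: eq_card => w; rewrite !inE.
by case: eqP => [-> | _]; rewrite ?ltnNge ?fxy ?andbF.
Qed.

Hypothesis f_inj : {in S &, injective f}.

Lemma rank_surj j : j < #|S| -> exists2 y, y \in S & rank f S y = j.
Proof.
move=> hj.
have uniq_ranks : uniq [seq rank f S y | y <- enum S].
  rewrite map_inj_in_uniq ?enum_uniq // => u v; rewrite !mem_enum => uS vS ruv.
  by apply: f_inj => //; exact: rank_eq.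
have sub_ranks : {subset [seq rank f S y | y <- enum S] <= iota 0 #|S|}.
  move=> i /mapP [y]; rewrite mem_enum => yS ->.
  by rewrite mem_iota add0n rank_lt_card.
have := uniq_min_size uniq_ranks sub_ranks.
rewrite size_map size_iota -cardE leqnn => -[// | _ /(_ j)].
rewrite mem_iota hj => /mapP [y]; rewrite mem_enum => yS ->.
by exists y.
Qed.

End Rank.

Notation rank_perm sigma := (rank (fun v => nat_of_ord (sigma v))).

Lemma rank_imset (A B : finType) (h : A -> B) (fA : A -> nat) (fB : B -> nat)
    (S : {set A}) x :
  injective h -> (forall u v, (fB (h u) < fB (h v)) = (fA u < fA v)) ->
  rank fB (h @: S) (h x) = rank fA S x.
Proof.
move=> h_inj h_mono; rewrite /rank -(card_imset _ h_inj); apply: eq_card => w.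
rewrite inE; apply/andP/imsetP.
  by case=> /imsetP [v vS ->]; rewrite h_mono => lt; exists v; rewrite // inE vS.
by case=> v /setIdP [vS lt] ->; rewrite h_mono lt imset_f.
Qed.

Lemma inj_order_perm m n (phi : 'I_m -> 'I_n) : injective phi ->
  exists sigma : {perm 'I_m}, forall u v, (phi u < phi v) = (sigma u < sigma v).
Proof.
move=> phi_inj; pose s x := rank (fun y => nat_of_ord (phi y)) [set: 'I_m] x.
have s_lt x : s x < m by rewrite -[m in _ < m]card_ord -cardsT rank_lt_card ?inE.
have s_mono u v : (s u < s v) = (phi u < phi v) by rewrite rank_lt ?inE.
have s_inj : injective (fun x => Ordinal (s_lt x)).
  move=> u v [] /(rank_eq (f := fun y => nat_of_ord (phi y))).
  by rewrite !inE => /(_ isT isT) /val_inj /phi_inj.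
by exists (perm s_inj) => u v; rewrite !permE /= s_mono.
Qed.

Lemma lt_mono_inj m n (sigma : {perm 'I_m}) (phi : 'I_m -> 'I_n) :
  (forall u v, (phi u < phi v) = (sigma u < sigma v)) -> injective phi.
Proof.
move=> phi_mono u v phi_uv; apply: (perm_inj (s := sigma)); apply: val_inj.
case: (ltngtP (sigma u) (sigma v)) => // [lt_uv | lt_vu].
  by move: lt_uv; rewrite -phi_mono phi_uv ltnn.
by move: lt_vu; rewrite -phi_mono phi_uv ltnn.
Qed.

Definition nth_smallest n (S : {set 'I_n}) (j : nat) : option 'I_n :=
  [pick w in S | rank val S w == j].

Lemma nth_smallest_rank n (S : {set 'I_n}) z :
  z \in S -> nth_smallest S (rank val S z) = Some z.
Proof.
move=> zS; rewrite /nth_smallest; case: pickP => [w /andP [wS /eqP rw] | /(_ z)].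
  by congr Some; apply/val_inj/(rank_eq wS zS).
by rewrite zS eqxx.
Qed.

Lemma order_embedding m n (sigma : {perm 'I_m}) (Y : {set 'I_n}) : m < #|Y| ->
  exists (phi : {ffun 'I_m -> 'I_n}) (top : 'I_n),
  [/\ forall x, phi x \in Y, top \in Y,
      forall u v, (phi u < phi v) = (sigma u < sigma v) & forall x, phi x < top].
Proof.
move=> hY; have val_inj_Y : {in Y &, injective val} by move=> u v _ _; exact: val_inj.
have [top topY rank_top] := rank_surj val_inj_Y hY.
pose phi := [ffun x => odflt top (nth_smallest Y (sigma x))].
have phi_rank x : phi x \in Y /\ rank val Y (phi x) = sigma x.
  have [y yY rank_y] := rank_surj val_inj_Y (ltn_trans (ltn_ord (sigma x)) hY).
  by rewrite ffunE -rank_y nth_smallest_rank.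
have phi_mono u v : (phi u < phi v) = (sigma u < sigma v).
  by rewrite -(rank_lt _ _ (phi_rank u).1) (phi_rank u).2 (phi_rank v).2.
exists phi, top; split=> // [x | x]; first exact: (phi_rank x).1.
by rewrite -(rank_lt _ _ (phi_rank x).1) (phi_rank x).2 rank_top.
Qed.

Lemma local_coloringP (n r m : nat) (E : {set {set 'I_m}}) k
    (f : {ffun 'I_n -> {ffun {set 'I_n} -> 'I_k}}) :
  reflect (forall phi : {ffun 'I_m -> 'I_n}, injective phi -> exists x,
             {in E &, forall e e' : {set 'I_m},
                f (phi x) (phi @: e) = f (phi x) (phi @: e') -> phi @: e = phi @: e'})
          (local_coloring r E f).
Proof.
apply: (iffP forallP) => [hf phi phi_inj | hf phi].
  have /implyP /(_ (introT (injectiveP _) phi_inj)) /existsP [x hx] := hf phi.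
  exists x => e e' eE e'E /eqP same; apply/eqP.
  by move/forallP: hx => /(_ e) /implyP /(_ eE) /forall_inP /(_ e' e'E) /implyP; apply.
apply/implyP => /injectiveP /hf [x hx]; apply/existsP; exists x.
apply/forall_inP => e eE; apply/forall_inP => e' e'E; apply/implyP => /eqP same.
by rewrite (hx e e').
Qed.

Lemma has_local_coloring_widen n r m (E : {set {set 'I_m}}) k k' : k <= k' ->
  has_local_coloring n r E k -> has_local_coloring n r E k'.
Proof.
move=> le_kk' /existsP [f /local_coloringP hf]; apply/existsP.
exists [ffun v => [ffun S => widen_ord le_kk' (f v S)]].
apply/local_coloringP => phi /hf [x hx]; exists x => e e' eE e'E.
by rewrite !ffunE => /(congr1 val) /= /val_inj; exact: hx.
Qed.

Lemma Cr_le n r m (E : {set {set 'I_m}}) k : has_local_coloring n r E k -> Cr r n E <= k.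
Proof. by move=> hk; rewrite /Cr; case: ex_minnP => k0 _; apply; rewrite hk. Qed.

Lemma Cr_gt n r m (E : {set {set 'I_m}}) k :
  ~~ has_local_coloring n r E k -> k < 2 ^ n -> k < Cr r n E.
Proof.
move=> hk k_lt; rewrite /Cr; case: ex_minnP => k0 /orP [hk0 | /eqP -> //] _.
rewrite ltnNge; apply: contra hk => /has_local_coloring_widen; exact.
Qed.

Lemma mem_Tset r m (E : {set {set 'I_m}}) sigma x i e :
  e \in Tset r E sigma x i -> e \in E.
Proof. by rewrite /Tset; case: ifP => _ /setIdP []. Qed.

Section UpperBound.

Variables (r m : nat) (E : {set {set 'I_m}}).
Hypothesis hE : r_uniform r E.

Definition side_rank (T : finType) (f : T -> nat) (S : {set T}) (x : T) :=
  if x \in S then rank f S x else r + rank f S x.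

Lemma side_rank_lt (T : finType) (f : T -> nat) (S : {set T}) x :
  #|S| = r -> side_rank f S x < (2 * r).+1.
Proof.
move=> cardS; rewrite /side_rank; case: ifP => [xS | _].
  by have := rank_lt_card f xS; rewrite cardS; lia.
by have := rank_le_card f S x; rewrite cardS; lia.
Qed.

Lemma mem_Tset_side_rank (sigma : {perm 'I_m}) x e : e \in E ->
  e \in Tset r E sigma x (side_rank (fun v => nat_of_ord (sigma v)) e x).+1.
Proof.
move=> eE; rewrite /side_rank /Tset; have [xe | xNe] := boolP (x \in e).
  have := rank_lt_card (fun v => nat_of_ord (sigma v)) xe; rewrite hE // => lt_r.
  by rewrite ifT ?lt_r // !inE eE xe /=.
case: ifP => [| _]; first lia.
by rewrite !inE eE xNe /rank /=; apply/eqP; lia.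
Qed.

Lemma side_rank_imset n (sigma : {perm 'I_m}) (phi : 'I_m -> 'I_n) (e : {set 'I_m}) x :
  injective phi -> (forall u v, (phi u < phi v) = (sigma u < sigma v)) ->
  side_rank val (phi @: e) (phi x) = side_rank (fun v => nat_of_ord (sigma v)) e x.
Proof.
move=> phi_inj phi_mono.
by rewrite /side_rank (mem_imset _ _ phi_inj) (rank_imset _ _ phi_inj phi_mono).
Qed.

Definition side_rank_coloring n : {ffun 'I_n -> {ffun {set 'I_n} -> 'I_(2 * r).+1}} :=
  [ffun v => [ffun S => inord (side_rank val S v)]].

Lemma not_two_locally_large_witness : ~ two_locally_large r E ->
  forall sigma, exists x, forall i, 1 <= i <= 2 * r + 1 -> #|Tset r E sigma x i| <= 1.
Proof.
move=> nLL sigma; apply: NNPP => no_x; apply: nLL; exists sigma => x.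
apply: NNPP => no_i; apply: no_x; exists x => i hi.
by rewrite leqNgt; apply/negP => large; apply: no_i; exists i.
Qed.

Lemma Cr_bounded n : ~ two_locally_large r E -> Cr r n E <= (2 * r).+1.
Proof.
move=> nLL; apply: Cr_le; apply/existsP; exists (side_rank_coloring n).
apply/local_coloringP => phi phi_inj; have [sigma phi_mono] := inj_order_perm phi_inj.
have [x hx] := not_two_locally_large_witness nLL sigma.
exists x => e e' eE e'E; rewrite !ffunE !(side_rank_imset _ _ phi_inj phi_mono).
move=> /(congr1 val) /=; rewrite !inordK ?side_rank_lt ?hE // => same; congr (_ @: _).
pose i := (side_rank (fun v => nat_of_ord (sigma v)) e x).+1.
have le1 : #|Tset r E sigma x i| <= 1 by apply: hx; rewrite addn1 ltnS side_rank_lt ?hE.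
have e_in : e \in Tset r E sigma x i by exact: mem_Tset_side_rank.
have e'_in : e' \in Tset r E sigma x i by rewrite /i same; exact: mem_Tset_side_rank.
by rewrite (card_le1_eqP le1 e' e e'_in e_in).
Qed.

End UpperBound.

Section Pattern.

Variables (n r k : nat) (f : {ffun 'I_n -> {ffun {set 'I_n} -> 'I_k}}).

Definition pattern (S : {set 'I_n}) : {ffun 'I_r.+1 * 'I_r.+1 -> option 'I_k} :=
  [ffun jl : 'I_r.+1 * 'I_r.+1 =>
     if (nth_smallest S jl.1, nth_smallest S jl.2) is (Some z, Some w)
     then Some (f z (S :\ w)) else None].

Lemma pattern_rank (S : {set 'I_n}) z w : #|S| = r.+1 -> z \in S -> w \in S ->
  pattern S (inord (rank val S z), inord (rank val S w)) = Some (f z (S :\ w)).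
Proof.
move=> cardS zS wS; rewrite ffunE /= !inordK -?cardS ?rank_lt_card //.
by rewrite !nth_smallest_rank.
Qed.

Lemma eq_pattern_color (S S' : {set 'I_n}) z w z' w' :
  #|S| = r.+1 -> #|S'| = r.+1 -> pattern S = pattern S' ->
  z \in S -> w \in S -> z' \in S' -> w' \in S' ->
  rank val S z = rank val S' z' -> rank val S w = rank val S' w' ->
  f z (S :\ w) = f z' (S' :\ w').
Proof.
move=> cardS cardS' eq_pat zS wS z'S' w'S' rank_z rank_w.
apply: Some_inj; rewrite -!pattern_rank // rank_z rank_w.
by rewrite eq_pat.
Qed.

End Pattern.

Section Embedding.

Variables (m n r : nat) (E : {set {set 'I_m}}) (sigma : {perm 'I_m}).
Variables (Y : {set 'I_n}) (phi : 'I_m -> 'I_n) (top : 'I_n).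
Hypotheses (hE : r_uniform r E) (phiY : forall x, phi x \in Y) (topY : top \in Y).
Hypotheses (phi_mono : forall u v, (phi u < phi v) = (sigma u < sigma v))
           (phi_lt_top : forall x, phi x < top).

Let phi_inj : injective phi := lt_mono_inj phi_mono.

Lemma rank_phi (e : {set 'I_m}) x : rank val (phi @: e) (phi x) = rank_perm sigma e x.
Proof. exact: rank_imset. Qed.

Lemma imset_phi_sub (e : {set 'I_m}) : phi @: e \subset Y.
Proof. by apply/subsetP => _ /imsetP [v _ ->]. Qed.

Lemma card_imset_phi e : e \in E -> #|phi @: e| = r.
Proof. by move=> eE; rewrite card_imset // hE. Qed.

Lemma top_notin_imset (e : {set 'I_m}) : top \notin phi @: e.
Proof. by apply/imsetP => -[v _ top_v]; have := phi_lt_top v; rewrite -top_v ltnn. Qed.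

Lemma top_witness x e : e \in E -> x \in e ->
  [/\ top |: phi @: e \subset Y, #|top |: phi @: e| = r.+1,
      rank val (top |: phi @: e) (phi x) = rank_perm sigma e x
    & rank val (top |: phi @: e) top = r].
Proof.
move=> eE xe; split.
- by rewrite subUset sub1set topY imset_phi_sub.
- by rewrite cardsU1 top_notin_imset card_imset_phi.
- by rewrite rank_setU1 ?rank_phi //; exact: (ltnW (phi_lt_top x)).
rewrite rank_setU1 // -(card_imset_phi eE); apply: eq_card => w; rewrite inE.
by case: (boolP (w \in phi @: e)) => // /imsetP [v _ ->]; rewrite phi_lt_top.
Qed.

Lemma self_witness x e : e \in E -> x \notin e ->
  [/\ phi x |: phi @: e \subset Y, #|phi x |: phi @: e| = r.+1
    & rank val (phi x |: phi @: e) (phi x) = rank_perm sigma e x].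
Proof.
move=> eE xNe; split.
- by rewrite subUset sub1set phiY imset_phi_sub.
- by rewrite cardsU1 mem_imset // xNe card_imset_phi.
by rewrite rank_setU1 ?rank_phi.
Qed.

Lemma Tset_same_color k (f : {ffun 'I_n -> {ffun {set 'I_n} -> 'I_k}}) x i e e' :
  homogeneous r.+1 (pattern r f) Y ->
  e \in Tset r E sigma x i -> e' \in Tset r E sigma x i ->
  f (phi x) (phi @: e) = f (phi x) (phi @: e').
Proof.
rewrite /Tset => homY; case: ifP => _.
  move=> /setIdP [eE /andP [xe /eqP rank_e]] /setIdP [e'E /andP [xe' /eqP rank_e']].
  have [sub card rank_x rank_top] := top_witness eE xe.
  have [sub' card' rank_x' rank_top'] := top_witness e'E xe'.
  rewrite -(setU1K (top_notin_imset e)) -(setU1K (top_notin_imset e')).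
  apply: (eq_pattern_color card card' (homY _ _ sub sub' card card'));
    rewrite ?setU11 ?setU1r ?imset_f ?rank_top ?rank_top' //.
  by rewrite rank_x rank_x'; exact: etrans rank_e (esym rank_e').
move=> /setIdP [eE /andP [xNe /eqP rank_e]] /setIdP [e'E /andP [xNe' /eqP rank_e']].
have [sub card rank_x] := self_witness eE xNe.
have [sub' card' rank_x'] := self_witness e'E xNe'.
have phix_notin (e0 : {set 'I_m}) : x \notin e0 -> phi x \notin phi @: e0.
  by rewrite mem_imset.
rewrite -(setU1K (phix_notin _ xNe)) -(setU1K (phix_notin _ xNe')).
apply: (eq_pattern_color card card' (homY _ _ sub sub' card card'));
  rewrite ?setU11 // rank_x rank_x'; exact: etrans rank_e (esym rank_e').
Qed.

End Embedding.

Lemma two_locally_large_no_local_coloring r m (E : {set {set 'I_m}}) :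
  r_uniform r E -> two_locally_large r E ->
  forall k, exists N, forall n, N <= n -> ~~ has_local_coloring n r E k.
Proof.
move=> hE [sigma hLL] k.
have [N ramseyN] :=
  hypergraph_ramsey ({ffun 'I_r.+1 * 'I_r.+1 -> option 'I_k} : finType) r.+1 m.+1.
exists N => n leNn; apply/existsP => -[f /local_coloringP hf].
have card_setT : N <= #|[set: 'I_n]| by rewrite cardsT card_ord.
have [Y _ [hY homY]] := ramseyN _ _ (pattern r f) card_setT.
have [phi [top [phiY topY phi_mono phi_lt_top]]] := order_embedding sigma hY.
have phi_inj := lt_mono_inj phi_mono.
have [x hx] := hf phi phi_inj.
have [i [_ /card_gt1P [e [e' [he he' neq_ee']]]]] := hLL x.
case/negP: neq_ee'; apply/eqP/(imset_inj phi_inj).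
apply: hx (mem_Tset he) (mem_Tset he') _.
exact: (Tset_same_color (phi := phi) hE phiY topY phi_mono phi_lt_top homY he he').
Qed.

Lemma Cr_unbounded r m (E : {set {set 'I_m}}) :
  r_uniform r E -> two_locally_large r E -> forall C, exists n, C < Cr r n E.
Proof.
move=> hE hLL C; have [N hN] := two_locally_large_no_local_coloring hE hLL C.
exists (maxn N C); apply: Cr_gt; first exact/hN/leq_maxl.
exact: leq_ltn_trans (leq_maxr N C) (ltn_expl _ (isT : 1 < 2)).
Qed.

Theorem theorem7 (r m : nat) (E : {set {set 'I_m}}) (hr : 2 <= r)
  (hE : r_uniform r E) :
  (exists C : nat, forall n : nat, Cr r n E <= C) <-> ~ two_locally_large r E.
Proof.
split=> [[C hC] hLL | nLL].
  by have [n] := Cr_unbounded hE hLL C; rewrite ltnNge hC.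
by exists (2 * r).+1 => n; exact: Cr_bounded.
Qed.
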